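(* Let $(\mathfrak{g},[\cdot,\cdot]_{\mathfrak{g}},\phi_{\mathfrak{g}})$ and $(\mathfrak g^*,[\cdot,\cdot]_{\mathfrak g^*},\phi_{\mathfrak g^*})$ be two weakly involutive Hom-Lie algebras ($\mathfrak g$ finite-dimensional, $\mathfrak g^*$ its dual space, $\phi_{\mathfrak g^*}$ an arbitrary linear map). Then $(\mathfrak g\oplus\mathfrak g^*;\mathfrak g,\mathfrak g^* )$ is a Manin triple of Hom-Lie algebras associated to the nondegenerate symmetric bilinear form $\mathfrak B(x+a,y+b)=\langle x,b\rangle+\langle y,a\rangle$ (i.e. there is a Hom-Lie algebra structure on $\mathfrak g\oplus\mathfrak g^*$ having $\mathfrak g$ and $\mathfrak g^*$ as Hom-Lie subalgebras with their given structures and for which $\mathfrak B$ is invariant) if and only if $\phi_{\mathfrak g^*}=\phi_{\mathfrak g}^*$ and $(\mathfrak g,\mathfrak g^*;\mathrm{ad}^\circ,\mathfrak{ad}^\circ)$ is a matched pair of Hom-Lie algebras.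
   Context: A Hom-Lie algebra $(\mathfrak{h},[\cdot,\cdot]_{\mathfrak{h}},\phi_{\mathfrak{h}})$: skew-symmetric bilinear bracket and linear map with $\phi_{\mathfrak h}[x,y]=[\phi_{\mathfrak h}x,\phi_{\mathfrak h}y]$ and $[\phi_{\mathfrak h}(x),[y,z]]+[\phi_{\mathfrak h}(y),[z,x]]+[\phi_{\mathfrak h}(z),[x,y]]=0$; weakly involutive if $[\phi_{\mathfrak h}^2(x),y]=[x,y]$. A representation $(V,\beta,\rho)$: $\beta\in\mathfrak{gl}(V)$, $\rho:\mathfrak h\to\mathfrak{gl}(V)$ with $\rho(\phi_{\mathfrak h}(x))\beta=\beta\rho(x)$ and $\rho([x,y])\beta=\rho(\phi_{\mathfrak h}(x))\rho(y)-\rho(\phi_{\mathfrak h}(y))\rho(x)$. $\mathrm{ad}^\circ:\mathfrak g\to\mathfrak{gl}(\mathfrak g^* )$, $\langle\mathrm{ad}^\circ_xa,y\rangle=-\langle a,[\phi_{\mathfrak g}(x),y]_{\mathfrak g}\rangle$; $\mathfrak{ad}^\circ:\mathfrak g^*\to\mathfrak{gl}(\mathfrak g)$, $\langle\mathfrak{ad}^\circ_ax,b\rangle=-\langle x,[\phi_{\mathfrak g^*}(a),b]_{\mathfrak g^*}\rangle$. A bilinear form $\mathfrak B$ on a Hom-Lie algebra $(\mathfrak k,[\cdot,\cdot]_{\mathfrak k},\phi_{\mathfrak k})$ is invariant if $\mathfrak B([x,y]_{\mathfrak k},z)=\mathfrak B(x,[\phi_{\mathfrak k}(y),z]_{\mathfrak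 k})$ and $\mathfrak B(\phi_{\mathfrak k}(x),y)=\mathfrak B(x,\phi_{\mathfrak k}(y))$. A Manin triple $(\mathfrak k;\mathfrak g,\mathfrak g')$: a Hom-Lie algebra $\mathfrak k$ with a nondegenerate symmetric invariant bilinear form such that $\mathfrak g,\mathfrak g'$ are isotropic Hom-Lie subalgebras and $\mathfrak k=\mathfrak g\oplus\mathfrak g'$ as vector spaces. A matched pair $(\mathfrak g,\mathfrak g';\rho,\rho')$: Hom-Lie algebras $\mathfrak g,\mathfrak g'$, representations $(\mathfrak g',\phi_{\mathfrak g'},\rho)$ of $\mathfrak g$ and $(\mathfrak g,\phi_{\mathfrak g},\rho')$ of $\mathfrak g'$ with, for all $x,y\in\mathfrak g$, $x',y'\in\mathfrak g'$: $\rho'(\phi_{\mathfrak g'}(x'))[x,y]_{\mathfrak g}=[\rho'(x')x,\phi_{\mathfrak g}(y)]_{\mathfrak g}+[\phi_{\mathfrak g}(x),\rho'(x')y]_{\mathfrak g}+\rho'(\rho(y)x')\phi_{\mathfrak g}(x)-\rho'(\rho(x)x')\phi_{\mathfrak g}(y)$ and $\rho(\phi_{\mathfrak g}(x))[x',y']_{\mathfrak g'}=[\rho(x)x',\phi_{\mathfrak g'}(y')]_{\mathfrak g'}+[\phi_{\mathfrak g'}(x'),\rho(x)y']_{\mathfrak g'}+\rho(\rho'(y')x)\phi_{\mathfrak g'}(x')-\rho(\rho'(x')x)\phi_{\mathfrak g'}(y')$. *)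

From HB Require Import structures.
From mathcomp Require Import all_boot all_order all_algebra.
Set Implicit Arguments. Unset Strict Implicit. Unset Printing Implicit Defensive.
Import Order.TTheory GRing.Theory Num.Theory.
Local Open Scope ring_scope.

Section HomLie.
Variable K : fieldType.

Definition lin (U V : lmodType K) (f : U -> V) : Prop :=
  forall (c : K) (u v : U), f (c *: u + v) = c *: f u + f v.

Definition is_HomLie (V : lmodType K) (br : V -> V -> V) (phi : V -> V) : Prop :=
  ((forall y, lin (fun x => br x y)) /\
      (forall x, lin (br x)) /\
      (forall x y, br x y = - br y x) /\
      lin phi /\
      (forall x y, phi (br x y) = br (phi x) (phi y)) /\
      (forall x y z, br (phi x) (br y z) + br (phi y) (br z x)
                       + br (phi z) (br x y) = 0)).

Definition weakly_involutive (V : lmodType K) (br : V -> V -> V) (phi : V -> V) :=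
  forall x y, br (phi (phi x)) y = br x y.

Definition is_rep (H W : lmodType K) (br : H -> H -> H) (phi : H -> H)
    (beta : W -> W) (rho : H -> W -> W) : Prop :=
  (lin beta /\
      (forall x, lin (rho x)) /\
      (forall (c : K) x y w, rho (c *: x + y) w = c *: rho x w + rho y w) /\
      (forall x w, rho (phi x) (beta w) = beta (rho x w)) /\
      (forall x y w, rho (br x y) (beta w)
                     = rho (phi x) (rho y w) - rho (phi y) (rho x w))).

Definition matched_pair (G G' : lmodType K)
    (brg : G -> G -> G) (phig : G -> G) (brg' : G' -> G' -> G') (phig' : G' -> G')
    (rho : G -> G' -> G') (rho' : G' -> G -> G) : Prop :=
  (is_HomLie brg phig /\ is_HomLie brg' phig' /\
      is_rep brg phig phig' rho /\ is_rep brg' phig' phig rho' /\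
      (forall x y x', rho' (phig' x') (brg x y)
          = brg (rho' x' x) (phig y) + brg (phig x) (rho' x' y)
            + rho' (rho y x') (phig x) - rho' (rho x x') (phig y)) /\
      (forall x x' y', rho (phig x) (brg' x' y')
          = brg' (rho x x') (phig' y') + brg' (phig' x') (rho x y')
            + rho (rho' y' x) (phig' x') - rho (rho' x' x) (phig' y'))).

Definition invariant_form (W : lmodType K) (br : W -> W -> W) (phi : W -> W)
    (B : W -> W -> K) : Prop :=
  (forall x y z, B (br x y) z = B x (br (phi y) z)) /\
  (forall x y, B (phi x) y = B x (phi y)).

End HomLie.

(* The finite-dimensional space g is modelled as K^n = 'rV[K]_n, and its dual
   space g^* as 'rV[K]_n with the canonical pairing <x, a> = sum_i x_i a_i. *)
Section Dual.
Variables (K : fieldType) (n : nat).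
Local Notation V := 'rV[K]_n.

Definition pair (x a : V) : K := \sum_(i < n) x 0 i * a 0 i.

(* ad°_x a : <ad°_x a, y> = - <a, [phi_g x, y]_g>  (coordinates w.r.t. the
   standard basis) *)
Definition ad_circ (brg : V -> V -> V) (phig : V -> V) (x : V) (a : V) : V :=
  \row_j (- pair (brg (phig x) (delta_mx 0 j)) a).

(* frak-ad°_a x : <frak-ad°_a x, b> = - <x, [phi_g* a, b]_g*> *)
Definition frak_ad_circ (brs : V -> V -> V) (phis : V -> V) (a : V) (x : V) : V :=
  \row_j (- pair x (brs (phis a) (delta_mx 0 j))).

Definition Bform (u v : V * V) : K := pair u.1 v.2 + pair v.1 u.2.

Definition manin_triple_double (brg : V -> V -> V) (phig : V -> V)
    (brs : V -> V -> V) (phis : V -> V) : Prop :=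
  ((forall u v, Bform u v = Bform v u) /\
      (forall u, (forall v, Bform u v = 0) -> u = 0) /\
      (forall x y : V, Bform (x, 0) (y, 0) = 0) /\
      (forall a b : V, Bform (0, a) (0, b) = 0)/\
      exists (brk : V * V -> V * V -> V * V) (phik : V * V -> V * V),
        (is_HomLie brk phik /\
            (forall x y, brk (x, 0) (y, 0) = (brg x y, 0)) /\
            (forall x, phik (x, 0) = (phig x, 0)) /\
            (forall a b, brk (0, a) (0, b) = (0, brs a b)) /\
            (forall a, phik (0, a) = (0, phis a)) /\
            invariant_form brk phik Bform)).
End Dual.

(* The bracket of a Manin triple on g (+) g^* is forced by invariance of B: it restricts to
   the given brackets and its mixed part is [x, a] = (- frak-ad°_a x, ad°_x a), while
   invariance of the twisting map forces phi_g* = phi_g^*.  For arbitrary bilinear actions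
   rho, rho', the bracket on g (+) g^* with these restrictions and mixed part
   (- rho'_a x, rho_x a) is Hom-Lie exactly when (g, g^*; rho, rho') is a matched pair:
   multiplicativity on a mixed pair gives rho(phi x) beta = beta rho(x), and the Jacobiator
   on triples of type (g, g, g^* ) resp. (g^*, g^*, g) has as components the representation
   identity and the compatibility condition.  Finally, for the coadjoint actions this bracket
   is B-invariant as soon as phi_g* = phi_g^* and both twistings are weakly involutive. *)

From HB Require Import structures.
From mathcomp Require Import all_boot all_order all_algebra.
From mathcomp Require Import ring.
Import GRing.Theory.
Local Open Scope ring_scope.
Set Implicit Arguments. Unset Strict Implicit. Unset Printing Implicit Defensive.

Section LinearMaps.
Variables (K : fieldType) (U W : lmodType K) (f : U -> W).
Hypothesis f_lin : lin f.

Lemma linD u v : f (u + v) = f u + f v.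
Proof. by have := f_lin 1 u v; rewrite !scale1r. Qed.

Lemma lin0 : f 0 = 0.
Proof. by apply: (addrI (f 0)); rewrite -linD !addr0. Qed.

Lemma linZ c u : f (c *: u) = c *: f u.
Proof. by have := f_lin c u 0; rewrite !addr0 lin0 addr0. Qed.

Lemma linN u : f (- u) = - f u.
Proof. by rewrite -scaleN1r linZ scaleN1r. Qed.

Definition linE := (linD, linZ, linN, lin0).

End LinearMaps.

Definition bilin (K : fieldType) (U V W : lmodType K) (b : U -> V -> W) : Prop :=
  (forall v, lin (b^~ v)) /\ (forall u, lin (b u)).

Section BilinearMaps.
Variables (K : fieldType) (U V W : lmodType K) (b : U -> V -> W).
Hypothesis b_bilin : bilin b.

Lemma bilinDl u1 u2 v : b (u1 + u2) v = b u1 v + b u2 v.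
Proof. exact: (linD (b_bilin.1 v)). Qed.
Lemma bilinDr u v1 v2 : b u (v1 + v2) = b u v1 + b u v2.
Proof. exact: (linD (b_bilin.2 u)). Qed.
Lemma bilinZl c u v : b (c *: u) v = c *: b u v.
Proof. exact: (linZ (b_bilin.1 v)). Qed.
Lemma bilinZr c u v : b u (c *: v) = c *: b u v.
Proof. exact: (linZ (b_bilin.2 u)). Qed.
Lemma bilinNl u v : b (- u) v = - b u v.
Proof. exact: (linN (b_bilin.1 v)). Qed.
Lemma bilinNr u v : b u (- v) = - b u v.
Proof. exact: (linN (b_bilin.2 u)). Qed.
Lemma bilin0l v : b 0 v = 0.
Proof. exact: (lin0 (b_bilin.1 v)). Qed.
Lemma bilin0r u : b u 0 = 0.
Proof. exact: (lin0 (b_bilin.2 u)). Qed.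

Definition bilinE :=
  (bilinDl, bilinDr, bilinZl, bilinZr, bilinNl, bilinNr, bilin0l, bilin0r).

End BilinearMaps.

Section Pairing.
Variables (K : fieldType) (n : nat).
Local Notation V := 'rV[K]_n.

Lemma pairC (x a : V) : pair x a = pair a x.
Proof. by apply: eq_bigr => i _; rewrite mulrC. Qed.

Lemma pairDl (x y a : V) : pair (x + y) a = pair x a + pair y a.
Proof. by rewrite /pair -big_split; apply: eq_bigr => i _; rewrite !mxE mulrDl. Qed.

Lemma pairZl c (x a : V) : pair (c *: x) a = c * pair x a.
Proof. by rewrite /pair mulr_sumr; apply: eq_bigr => i _; rewrite !mxE mulrA. Qed.

Lemma pairNl (x a : V) : pair (- x) a = - pair x a.
Proof. by rewrite -scaleN1r pairZl mulN1r. Qed.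

Lemma pair0l (a : V) : pair 0 a = 0.
Proof. by rewrite -(scale0r 0) pairZl mul0r. Qed.

Lemma pairDr (x a b : V) : pair x (a + b) = pair x a + pair x b.
Proof. by rewrite !(pairC x) pairDl. Qed.

Lemma pairZr c (x a : V) : pair x (c *: a) = c * pair x a.
Proof. by rewrite !(pairC x) pairZl. Qed.

Lemma pairNr (x a : V) : pair x (- a) = - pair x a.
Proof. by rewrite !(pairC x) pairNl. Qed.

Lemma pair0r (x : V) : pair x 0 = 0.
Proof. by rewrite pairC pair0l. Qed.

Lemma pair_delta j (a : V) : pair (delta_mx 0 j) a = a 0 j.
Proof.
rewrite /pair (bigD1 j) //= big1 ?addr0; first by rewrite mxE !eqxx mul1r.
by move=> i /negPf ne; rewrite mxE ne andbF mul0r.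
Qed.

Lemma pair_injr (a b : V) : (forall y, pair y a = pair y b) -> a = b.
Proof. by move=> h; apply/rowP => j; rewrite -!pair_delta. Qed.

Lemma pair_injl (x y : V) : (forall a, pair x a = pair y a) -> x = y.
Proof. by move=> h; apply: pair_injr => a; rewrite !(pairC a). Qed.

Lemma pair_row_functional (f : V -> K) :
    (forall c u v, f (c *: u + v) = c * f u + f v) ->
  forall x, pair x (\row_j f (delta_mx 0 j)) = f x.
Proof.
move=> f_lin x.
have fD : {morph f : u v / u + v} by move=> u v; have := f_lin 1 u v; rewrite scale1r mul1r.
have f0 : f 0 = 0 by apply: (addrI (f 0)); rewrite -fD !addr0.
rewrite {2}(row_sum_delta x) (big_morph f fD f0) /pair.
by apply: eq_bigr => j _; rewrite mxE; have := f_lin (x 0 j) (delta_mx 0 j) 0; rewrite !addr0 f0 addr0.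
Qed.

End Pairing.

Definition jacobiator (W : zmodType) (br : W -> W -> W) (phi : W -> W) (u v w : W) : W :=
  br (phi u) (br v w) + br (phi v) (br w u) + br (phi w) (br u v).

Section Jacobiator.
Variables (K : fieldType) (W : lmodType K) (br : W -> W -> W) (phi : W -> W).
Hypotheses (br_bilin : bilin br) (phi_lin : lin phi).
Local Notation J := (jacobiator br phi).

Lemma jacobiator_cycle u v w : J u v w = J v w u.
Proof. by rewrite /jacobiator [RHS]addrC addrA. Qed.

Lemma jacobiatorDl u1 u2 v w : J (u1 + u2) v w = J u1 v w + J u2 v w.
Proof.
rewrite /jacobiator (linD phi_lin) !(bilinE br_bilin).
by rewrite (addrACA (br (phi u1) _)) (addrACA (br (phi u1) _ + _)).
Qed.

Lemma jacobiatorDm u v1 v2 w : J u (v1 + v2) w = J u v1 w + J u v2 w.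
Proof. by rewrite (jacobiator_cycle u) jacobiatorDl -!(jacobiator_cycle u). Qed.

Lemma jacobiatorDr u v w1 w2 : J u v (w1 + w2) = J u v w1 + J u v w2.
Proof. by rewrite -(jacobiator_cycle (w1 + w2)) jacobiatorDl !(jacobiator_cycle _ u v). Qed.

End Jacobiator.

Section HomLieFacts.
Variables (K : fieldType) (V : lmodType K) (br : V -> V -> V) (phi : V -> V).
Hypothesis HL : is_HomLie br phi.

Lemma HomLie_bilin : bilin br.
Proof. by case: HL => l1 [l2 _]. Qed.
Lemma HomLie_skew x y : br x y = - br y x.
Proof. by case: HL => _ [_ []]. Qed.
Lemma HomLie_phi_lin : lin phi.
Proof. by case: HL => _ [_ [_ []]]. Qed.
Lemma HomLie_mult x y : phi (br x y) = br (phi x) (phi y).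
Proof. by case: HL => _ [_ [_ [_ []]]]. Qed.
Lemma HomLie_jacobi x y z : jacobiator br phi x y z = 0.
Proof. by case: HL => _ [_ [_ [_ [_ ja]]]]; apply: ja. Qed.

End HomLieFacts.

Lemma is_HomLie_eq (K : fieldType) (V : lmodType K) (br br' : V -> V -> V) (phi phi' : V -> V) :
  br =2 br' -> phi =1 phi' -> is_HomLie br phi -> is_HomLie br' phi'.
Proof.
move=> e_br e_phi [l1 [l2 [sk [lp [mu ja]]]]].
split; [|split; [|split; [|split; [|split]]]].
- by move=> y c u v; rewrite -!e_br; apply: l1.
- by move=> x c u v; rewrite -!e_br; apply: l2.
- by move=> x y; rewrite -!e_br.
- by move=> c u v; rewrite -!e_phi.
- by move=> x y; rewrite -!e_br -!e_phi.
- by move=> x y z; rewrite -!e_br -!e_phi.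
Qed.

Section ProductSpace.
Variables (K : fieldType) (U W : lmodType K).
Implicit Types (x y : U) (a b : W).

Lemma prodD x a y b : (x, a) + (y, b) = (x + y, a + b). Proof. by []. Qed.
Lemma prodN x a : - (x, a) = (- x, - a). Proof. by []. Qed.
Lemma prodZ c x a : c *: (x, a) = (c *: x, c *: a). Proof. by []. Qed.
Lemma prod0 : (0 : U * W) = (0, 0). Proof. by []. Qed.
Lemma prod_split x a : (x, a) = (x, 0) + (0, a).
Proof. by rewrite prodD addr0 add0r. Qed.

End ProductSpace.

Section DoubleBracket.
Variables (K : fieldType) (n : nat).
Local Notation V := 'rV[K]_n.
Variables (brg brs : V -> V -> V) (phig phis : V -> V) (rho rho' : V -> V -> V).

Definition double_br (u v : V * V) : V * V :=
  (brg u.1 v.1 - rho' v.2 u.1 + rho' u.2 v.1, brs u.2 v.2 + rho u.1 v.2 - rho v.1 u.2).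

Definition double_phi (u : V * V) : V * V := (phig u.1, phis u.2).

Hypotheses (brg_bilin : bilin brg) (brs_bilin : bilin brs).
Hypotheses (rho_bilin : bilin rho) (rho'_bilin : bilin rho').
Hypotheses (phig_lin : lin phig) (phis_lin : lin phis).
Hypotheses (brg_skew : forall x y, brg x y = - brg y x)
           (brs_skew : forall a b, brs a b = - brs b a).

Local Ltac expand := rewrite /= ?(bilinE brg_bilin, bilinE brs_bilin, bilinE rho_bilin,
  bilinE rho'_bilin, linE phig_lin, linE phis_lin, subr0, addr0, add0r, sub0r, oppr0).
Local Ltac entrywise := rewrite ?(prodD, prodN, prodZ) /=; congr (_, _);
  apply/rowP => j; rewrite !mxE; ring.

Lemma double_br_bilin : bilin double_br.
Proof.
by split=> [[z d]|[z d]] c [x a] [y b]; rewrite /double_br prodZ prodD; expand; entrywise.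
Qed.

Lemma double_phi_lin : lin double_phi.
Proof. by move=> c [x a] [y b]; rewrite /double_phi prodZ prodD; expand. Qed.

Lemma double_br_skew u v : double_br u v = - double_br v u.
Proof.
case: u v => [x a] [y b]; rewrite /double_br /= (brg_skew y) (brs_skew b).
entrywise.
Qed.

Lemma double_br_gg x y : double_br (x, 0) (y, 0) = (brg x y, 0).
Proof. by rewrite /double_br; expand. Qed.

Lemma double_br_ss a b : double_br (0, a) (0, b) = (0, brs a b).
Proof. by rewrite /double_br; expand. Qed.

Lemma double_br_gs x a : double_br (x, 0) (0, a) = (- rho' a x, rho x a).
Proof. by rewrite /double_br; expand. Qed.

Lemma double_phi_g x : double_phi (x, 0) = (phig x, 0).
Proof. by rewrite /double_phi; expand. Qed.

Lemma double_phi_s a : double_phi (0, a) = (0, phis a).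
Proof. by rewrite /double_phi; expand. Qed.

Lemma double_brE (brk : V * V -> V * V -> V * V) :
    bilin brk -> (forall u v, brk u v = - brk v u) ->
    (forall x y, brk (x, 0) (y, 0) = (brg x y, 0)) ->
    (forall a b, brk (0, a) (0, b) = (0, brs a b)) ->
    (forall x a, brk (x, 0) (0, a) = (- rho' a x, rho x a)) ->
  brk =2 double_br.
Proof.
move=> brk_bilin brk_skew brk_g brk_s brk_gs [x a] [y b].
rewrite /double_br /= (prod_split x) (prod_split y) !(bilinE brk_bilin).
rewrite (brk_skew (0, a)) brk_g brk_s !brk_gs.
entrywise.
Qed.

Lemma double_phiE (phik : V * V -> V * V) : lin phik ->
    (forall x, phik (x, 0) = (phig x, 0)) -> (forall a, phik (0, a) = (0, phis a)) ->
  phik =1 double_phi.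
Proof.
move=> phik_lin phik_g phik_s [x a].
by rewrite /double_phi /= (prod_split x) (linD phik_lin) phik_g phik_s prodD addr0 add0r.
Qed.

Local Notation J := (jacobiator double_br double_phi).

Lemma double_jacobiator_ggg x y z : J (x, 0) (y, 0) (z, 0) = (jacobiator brg phig x y z, 0).
Proof. by rewrite /jacobiator /double_br /double_phi; expand; entrywise. Qed.

Lemma double_jacobiator_sss a b c : J (0, a) (0, b) (0, c) = (0, jacobiator brs phis a b c).
Proof. by rewrite /jacobiator /double_br /double_phi; expand; entrywise. Qed.

Lemma double_jacobiator_ggs x y a : J (x, 0) (y, 0) (0, a) =
  (rho' (phis a) (brg x y) - (brg (rho' a x) (phig y) + brg (phig x) (rho' a y)
      + rho' (rho y a) (phig x) - rho' (rho x a) (phig y)),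
   rho (phig x) (rho y a) - rho (phig y) (rho x a) - rho (brg x y) (phis a)).
Proof.
rewrite /jacobiator /double_br /double_phi; expand.
by rewrite (brg_skew (phig y)); entrywise.
Qed.

Lemma double_jacobiator_ssg a b x : J (0, a) (0, b) (x, 0) =
  (rho' (phis a) (rho' b x) - rho' (phis b) (rho' a x) - rho' (brs a b) (phig x),
   rho (phig x) (brs a b) - (brs (rho x a) (phis b) + brs (phis a) (rho x b)
      + rho (rho' b x) (phis a) - rho (rho' a x) (phis b))).
Proof.
rewrite /jacobiator /double_br /double_phi; expand.
by rewrite (brs_skew (phis b)); entrywise.
Qed.

Lemma double_jacobi :
    (forall x y z, jacobiator brg phig x y z = 0) -> (forall a b c, jacobiator brs phis a b c = 0) ->
    (forall x y a, J (x, 0) (y, 0) (0, a) = 0) -> (forall a b x, J (0, a) (0, b) (x, 0) = 0) ->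
  forall u v w, J u v w = 0.
Proof.
move=> Jg Js J_ggs J_ssg.
have J_gsg x y a : J (x, 0) (0, a) (y, 0) = 0 by rewrite -jacobiator_cycle J_ggs.
have J_sgg x y a : J (0, a) (x, 0) (y, 0) = 0 by rewrite jacobiator_cycle J_ggs.
have J_sgs x a b : J (0, a) (x, 0) (0, b) = 0 by rewrite -jacobiator_cycle J_ssg.
have J_gss x a b : J (x, 0) (0, a) (0, b) = 0 by rewrite jacobiator_cycle J_ssg.
move=> [x a] [y b] [z c]; rewrite (prod_split x) (prod_split y) (prod_split z).
rewrite !(jacobiatorDl double_br_bilin double_phi_lin) !(jacobiatorDm double_br_bilin double_phi_lin).
rewrite !(jacobiatorDr double_br_bilin double_phi_lin).
rewrite double_jacobiator_ggg double_jacobiator_sss Jg Js.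
by rewrite J_ggs J_ssg J_gsg J_sgg J_sgs J_gss -prod0 !addr0.
Qed.

Lemma double_phi_mult :
    (forall x y, phig (brg x y) = brg (phig x) (phig y)) ->
    (forall a b, phis (brs a b) = brs (phis a) (phis b)) ->
    (forall x a, rho (phig x) (phis a) = phis (rho x a)) ->
    (forall a x, rho' (phis a) (phig x) = phig (rho' a x)) ->
  forall u v, double_phi (double_br u v) = double_br (double_phi u) (double_phi v).
Proof.
move=> phig_mult phis_mult rho_phi rho'_phi [x a] [y b].
by rewrite /double_phi /double_br; expand; rewrite phig_mult phis_mult !rho_phi !rho'_phi.
Qed.

End DoubleBracket.

Section MatchedPairDouble.
Variables (K : fieldType) (n : nat).
Local Notation V := 'rV[K]_n.
Variables (brg brs : V -> V -> V) (phig phis : V -> V) (rho rho' : V -> V -> V).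
Hypotheses (Hg : is_HomLie brg phig) (Hs : is_HomLie brs phis).
Hypotheses (rho_bilin : bilin rho) (rho'_bilin : bilin rho').
Local Notation dbr := (double_br brg brs rho rho').
Local Notation dphi := (double_phi phig phis).

Let brg_bilin := HomLie_bilin Hg.
Let brs_bilin := HomLie_bilin Hs.
Let phig_lin := HomLie_phi_lin Hg.
Let phis_lin := HomLie_phi_lin Hs.
Let brg_skew := HomLie_skew Hg.
Let brs_skew := HomLie_skew Hs.
Let phig_mult := HomLie_mult Hg.
Let phis_mult := HomLie_mult Hs.
Let brg_jacobi := HomLie_jacobi Hg.
Let brs_jacobi := HomLie_jacobi Hs.

Lemma double_HomLie_of_matched_pair :
  matched_pair brg phig brs phis rho rho' -> is_HomLie dbr dphi.
Proof.
case=> _ [_ [[_ [_ [_ [rho_phi rho_br]]]] [[_ [_ [_ [rho'_phi rho'_br]]]] [compat compat']]]].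
have [dbr_l dbr_r] : bilin dbr by apply: double_br_bilin.
split; first exact: dbr_l.
split; first exact: dbr_r.
split; first exact: double_br_skew.
split; first exact: double_phi_lin.
split; first by apply: double_phi_mult.
apply: double_jacobi => // [x y a | a b x].
- by rewrite double_jacobiator_ggs // compat rho_br !subrr.
- by rewrite double_jacobiator_ssg // compat' rho'_br !subrr.
Qed.

Lemma matched_pair_of_double_HomLie :
  is_HomLie dbr dphi -> matched_pair brg phig brs phis rho rho'.
Proof.
move=> Hd.
have phi_gs x a : phig (rho' a x) = rho' (phis a) (phig x) /\ phis (rho x a) = rho (phig x) (phis a).
  have := HomLie_mult Hd (x, 0) (0, a).
  rewrite double_phi_g // double_phi_s // !double_br_gs // /double_phi /= (linN phig_lin).
  by case=> /oppr_inj.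
have J_ggs x y a := HomLie_jacobi Hd (x, 0) (y, 0) (0, a).
have J_ssg a b x := HomLie_jacobi Hd (0, a) (0, b) (x, 0).
split; first exact: Hg.
split; first exact: Hs.
split.
  split; first exact: phis_lin.
  split; first exact: rho_bilin.2.
  split; first by move=> c x y w; apply: (rho_bilin.1 w).
  split; first by move=> x a; have [_ ->] := phi_gs x a.
  move=> x y a; move: (J_ggs x y a).
  by rewrite double_jacobiator_ggs // prod0 => -[_ /subr0_eq <-].
split.
  split; first exact: phig_lin.
  split; first exact: rho'_bilin.2.
  split; first by move=> c a b x; apply: (rho'_bilin.1 x).
  split; first by move=> a x; have [-> _] := phi_gs x a.
  move=> a b x; move: (J_ssg a b x).
  by rewrite double_jacobiator_ssg // prod0 => -[/subr0_eq <- _].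
split=> [x y a | x a b].
- by move: (J_ggs x y a); rewrite double_jacobiator_ggs // prod0 => -[/subr0_eq].
- by move: (J_ssg a b x); rewrite double_jacobiator_ssg // prod0 => -[_ /subr0_eq].
Qed.

Lemma double_HomLieP : is_HomLie dbr dphi <-> matched_pair brg phig brs phis rho rho'.
Proof.
by split; [exact: matched_pair_of_double_HomLie | exact: double_HomLie_of_matched_pair].
Qed.

End MatchedPairDouble.

Section BilinearForm.
Variables (K : fieldType) (n : nat).
Local Notation V := 'rV[K]_n.

Lemma BformC (u v : V * V) : Bform u v = Bform v u.
Proof. by rewrite /Bform addrC. Qed.

Lemma Bform_nondegenerate (u : V * V) : (forall v, Bform u v = 0) -> u = 0.
Proof.
case: u => x a u_orth; rewrite prod0; congr (_, _).
- apply: pair_injl => b; have := u_orth (0, b).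
  by rewrite /Bform /= !pair0l addr0.
- apply: pair_injr => y; have := u_orth (y, 0).
  by rewrite /Bform /= !pair0r add0r.
Qed.

Lemma Bform_gg (x y : V) : Bform (x, 0) (y, 0) = 0.
Proof. by rewrite /Bform /= !pair0r addr0. Qed.

Lemma Bform_ss (a b : V) : Bform (0, a) (0, b) = 0.
Proof. by rewrite /Bform /= !pair0l addr0. Qed.

End BilinearForm.

Section CoadjointDouble.
Variables (K : fieldType) (n : nat).
Local Notation V := 'rV[K]_n.
Variables (brg brs : V -> V -> V) (phig phis : V -> V).
Hypotheses (Hg : is_HomLie brg phig) (Hs : is_HomLie brs phis).
Local Notation ad := (ad_circ brg phig).
Local Notation fr := (frak_ad_circ brs phis).
Local Notation dbr := (double_br brg brs ad fr).
Local Notation dphi := (double_phi phig phis).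

Let brg_bilin := HomLie_bilin Hg.
Let brs_bilin := HomLie_bilin Hs.
Let phig_lin := HomLie_phi_lin Hg.
Let phis_lin := HomLie_phi_lin Hs.

Lemma pair_ad_circ y x a : pair y (ad x a) = - pair (brg (phig x) y) a.
Proof.
apply: (pair_row_functional (f := fun y => - pair (brg (phig x) y) a)) => c u v.
by rewrite (bilinDr brg_bilin) (bilinZr brg_bilin) pairDl pairZl; ring.
Qed.

Lemma pair_frak_ad_circ a x b : pair (fr a x) b = - pair x (brs (phis a) b).
Proof.
rewrite pairC; apply: (pair_row_functional (f := fun b => - pair x (brs (phis a) b))) => c u v.
by rewrite (bilinDr brs_bilin) (bilinZr brs_bilin) pairDr pairZr; ring.
Qed.

Lemma ad_circ_bilin : bilin ad.
Proof.
split=> [a|x] c u v; apply/rowP => j; rewrite !mxE.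
- rewrite (linD phig_lin) (linZ phig_lin).
  by rewrite (bilinDl brg_bilin) (bilinZl brg_bilin) pairDl pairZl; ring.
- by rewrite pairDr pairZr; ring.
Qed.

Lemma frak_ad_circ_bilin : bilin fr.
Proof.
split=> [x|a] c u v; apply/rowP => j; rewrite !mxE.
- rewrite (linD phis_lin) (linZ phis_lin).
  by rewrite (bilinDl brs_bilin) (bilinZl brs_bilin) pairDr pairZr; ring.
- by rewrite pairDl pairZl; ring.
Qed.

Lemma double_br_invariant :
    weakly_involutive brg phig -> weakly_involutive brs phis ->
    (forall x a, pair x (phis a) = pair (phig x) a) ->
  invariant_form dbr dphi (@Bform K n).
Proof.
move=> Wg Ws adj; split=> [[x a] [y b] [z c] | [x a] [y b]];
  rewrite /Bform /double_br /double_phi /=; last by rewrite !adj; ring.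
(* Adjointness moves every phi onto a bracket, where weak involutivity cancels phi^2;
   skew-symmetry then matches the six terms on each side. *)
rewrite !(pairDl, pairNl, pairDr, pairNr) !pair_ad_circ !pair_frak_ad_circ !Wg !Ws !adj.
rewrite (HomLie_mult Hg) Wg -(adj y) (HomLie_mult Hs) Ws.
rewrite (HomLie_skew Hg y x) (HomLie_skew Hg z (phig x)).
rewrite (HomLie_skew Hs c (phis a)) (HomLie_skew Hs b a) !(pairNl, pairNr).
ring.
Qed.

Section InvariantExtension.
Variables (brk : V * V -> V * V -> V * V) (phik : V * V -> V * V).
Hypotheses (phik_g : forall x, phik (x, 0) = (phig x, 0))
           (phik_s : forall a, phik (0, a) = (0, phis a)).

Lemma invariant_phi_adjoint :
    (forall u v, Bform (phik u) v = Bform u (phik v)) ->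
  forall x a, pair x (phis a) = pair (phig x) a.
Proof.
move=> inv x a; have := inv (x, 0) (0, a).
by rewrite phik_g phik_s /Bform /= !pair0l !addr0 => ->.
Qed.

Lemma invariant_bracket_gs :
    (forall u v, brk u v = - brk v u) ->
    (forall x y, brk (x, 0) (y, 0) = (brg x y, 0)) ->
    (forall a b, brk (0, a) (0, b) = (0, brs a b)) ->
    (forall u v w, Bform (brk u v) w = Bform u (brk (phik v) w)) ->
  forall x a, brk (x, 0) (0, a) = (- fr a x, ad x a).
Proof.
move=> brk_skew brk_g brk_s inv x a; apply: injective_projections => /=.
- apply: pair_injl => b; have := inv (x, 0) (0, a) (0, b).
  rewrite phik_s brk_s /Bform /= !pair0l !addr0 => ->.
  by rewrite pairNl pair_frak_ad_circ opprK.
- apply: pair_injr => y; rewrite brk_skew pair_ad_circ.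
  have := inv (0, a) (x, 0) (y, 0).
  rewrite phik_g brk_g /Bform /= !pair0l !pair0r !add0r.
  by case: (brk (0, a) (x, 0)) => p q /= h; rewrite pairNr h.
Qed.

End InvariantExtension.

Lemma manin_triple_double_HomLie :
    manin_triple_double brg phig brs phis ->
  (forall x a, pair x (phis a) = pair (phig x) a) /\ is_HomLie dbr dphi.
Proof.
case=> _ [_ [_ [_ [brk [phik [Hk [brk_g [phik_g [brk_s [phik_s [inv_br inv_phi]]]]]]]]]]].
split; first exact: (invariant_phi_adjoint phik_g phik_s inv_phi).
apply: (is_HomLie_eq _ _ Hk).
- apply: (double_brE (HomLie_bilin Hk) (HomLie_skew Hk) brk_g brk_s).
  exact: (invariant_bracket_gs phik_g phik_s (HomLie_skew Hk) brk_g brk_s inv_br).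
- exact: (double_phiE (HomLie_phi_lin Hk) phik_g phik_s).
Qed.

Lemma double_manin_triple :
    weakly_involutive brg phig -> weakly_involutive brs phis ->
    (forall x a, pair x (phis a) = pair (phig x) a) -> is_HomLie dbr dphi ->
  manin_triple_double brg phig brs phis.
Proof.
move=> Wg Ws adj Hd; have [ad_bilin fr_bilin] := (ad_circ_bilin, frak_ad_circ_bilin).
split; first exact: BformC.
split; first exact: Bform_nondegenerate.
split; first exact: Bform_gg.
split; first exact: Bform_ss.
exists dbr, dphi; split; first exact: Hd.
split; first exact: double_br_gg.
split; first exact: double_phi_g.
split; first exact: double_br_ss.
split; first exact: double_phi_s.
exact: double_br_invariant.
Qed.

End CoadjointDouble.

Unset Implicit Arguments.

Theorem proposition3p6 (K : fieldType) (n : nat)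
    (brg : 'rV[K]_n -> 'rV[K]_n -> 'rV[K]_n) (phig : 'rV[K]_n -> 'rV[K]_n)
    (brs : 'rV[K]_n -> 'rV[K]_n -> 'rV[K]_n) (phis : 'rV[K]_n -> 'rV[K]_n) :
  is_HomLie brg phig -> weakly_involutive brg phig ->
  is_HomLie brs phis -> weakly_involutive brs phis ->
  manin_triple_double brg phig brs phis <->
  ((forall x a : 'rV[K]_n, pair x (phis a) = pair (phig x) a) /\
   matched_pair brg phig brs phis (ad_circ brg phig) (frak_ad_circ brs phis)).
Proof.
move=> Hg Wg Hs Ws.
have double_HomLie := double_HomLieP Hg Hs (ad_circ_bilin Hg) (frak_ad_circ_bilin Hs).
split=> [/(manin_triple_double_HomLie Hg Hs) [adj /double_HomLie] | [adj /double_HomLie]] //.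
exact: double_manin_triple.
Qed.
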